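(* Assume conditions (C1), (C2) and (C3) hold and let $\{x_n\},\{w_n\},\{y_n\}$ be generated by Algorithm 3.1. Let $a:=\frac{5+2\varepsilon-\sqrt{8\varepsilon+17}}{2+2\varepsilon}$ (with $\varepsilon$ and $\theta$ from (C3)), and write $[t]_+:=\max\{t,0\}$. Then there exist an integer $N\ge1$ and a constant $M\ge 0$ with $\sum_{k=1}^\infty\|x_{k+1}-x_k\|^2\le M$ such that for every $p\in\Omega$ and every $n\ge N$, $$\min_{N\le i\le n}\|w_i-y_i\|\le\left(\frac{\Big(\|x_N-p\|^2+\frac{a}{1-a}\big[\|x_N-p\|^2-\|x_{N-1}-p\|^2\big]_++\frac{(2+\frac{1-\theta}{4\theta})M}{1-a}\Big)\frac{1}{\theta(1-\mu)}}{n-N+1}\right)^{1/2}.$$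
   Context: Let $H$ be a real Hilbert space, $A:H\to H$ a single-valued mapping and $B:H\to 2^H$ a set-valued mapping, and let $\Omega:=(A+B)^{-1}(0)=\{x\in H:\ 0\in Ax+Bx\}$. Algorithm 3.1 is the following iteration. Fix $x_0,x_1\in H$, $\mu\in(0,1)$, $\lambda_1>0$, real sequences $\{\alpha_n\},\{\beta_n\},\{\theta_n\}$ and nonnegative real sequences $\{\mu_n\},\{p_n\}$. For $n=1,2,\dots$ compute $w_n=x_n+\alpha_n(x_n-x_{n-1})$, $z_n=x_n+\beta_n(x_n-x_{n-1})$, $y_n=(I+\lambda_nB)^{-1}(I-\lambda_nA)w_n$, and set $\lambda_{n+1}=\min\{(\mu_n+\mu)\|w_n-y_n\|/\|Aw_n-Ay_n\|,\ \lambda_n+p_n\}$ if $Aw_n\neq Ay_n$, and $\lambda_{n+1}=\lambda_n+p_n$ otherwise. If $w_n=y_n$ the algorithm stops (then $y_n\in\Omega$). Otherwise set $x_{n+1}=(1-\theta_n)z_n+\theta_n\big(y_n-\lambda_n(Ay_n-Aw_n)\big)$ and continue. Here $I$ is the identity and $(I+\lambda B)^{-1}$ is the resolvent of $B$. Throughout, it is assumed that the algorithm does not stop, so that infinite sequences $\{x_n\},\{w_n\},\{z_n\},\{y_n\},\{\lambda_n\}$ are generated. Condition (C1): $\Omega\neq\emptyset$. Condition (C2): $A$ is $L$-Lipschitz continuous and monotone, and $B$ is maximal monotone. Condition (C3): there is $\varepsilon\in(1,\infty)$ such that (i) $0\le\alpha_n\le1$; (ii) $0\le\beta_n\le\beta_{n+1}\le\beta<\frac{3+2\varepsilon-\sqrt{8\varepsilon+17}}{2\varepsilon}$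 for some constant $\beta$; (iii) $0<\theta<\theta_n\le\theta_{n+1}\le\frac{1}{1+\varepsilon}$ for some constant $\theta$; (iv) $a_n:=(1-\theta_n)\beta_n+\theta_n\alpha_n$ is non-decreasing; (v) $\sum_{n=1}^\infty p_n<\infty$ and $\lim_{n\to\infty}\mu_n=0$. *)

From HB Require Import structures.
From mathcomp Require Import all_boot all_order all_algebra.
From mathcomp Require Import all_classical all_reals all_analysis.
Set Implicit Arguments. Unset Strict Implicit. Unset Printing Implicit Defensive.
Import Order.TTheory GRing.Theory Num.Theory.
Import numFieldNormedType.Exports.
Local Open Scope classical_set_scope.
Local Open Scope ring_scope.

(* A real Hilbert space is modelled as a complete normed space H over R
   together with an inner product inducing its norm. *)
Definition is_inner_product (R : realType) (H : normedModType R)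
  (ip : H -> H -> R) : Prop :=
  [/\ (forall x y, ip x y = ip y x),
      (forall x y z, ip (x + y) z = ip x z + ip y z),
      (forall (c : R) x y, ip (c *: x) y = c * ip x y) &
      (forall x, ip x x = `|x| ^+ 2)].

Definition monotone_op (R : realType) (H : normedModType R)
  (ip : H -> H -> R) (A : H -> H) : Prop :=
  forall x y, 0 <= ip (A x - A y) (x - y).

Definition monotone_setop (R : realType) (H : normedModType R)
  (ip : H -> H -> R) (B : H -> set H) : Prop :=
  forall x y u v, B x u -> B y v -> 0 <= ip (u - v) (x - y).

Definition maximal_monotone (R : realType) (H : normedModType R)
  (ip : H -> H -> R) (B : H -> set H) : Prop :=
  monotone_setop ip B /\
  forall B' : H -> set H, monotone_setop ip B' ->
    (forall x, B x `<=` B' x) -> forall x, B' x = B x.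

Definition lipschitz_op (R : realType) (H : normedModType R)
  (L : R) (A : H -> H) : Prop :=
  forall x y, `|A x - A y| <= L * `|x - y|.

Definition zeros_sum (R : realType) (H : normedModType R)
  (A : H -> H) (B : H -> set H) : set H :=
  [set x | exists u, B x u /\ A x + u = 0].

(* y = (I + lam B)^{-1} z, i.e. z belongs to y + lam B y *)
Definition resolvent_rel (R : realType) (H : normedModType R)
  (B : H -> set H) (lam : R) (z y : H) : Prop :=
  exists u, B y u /\ z = y + lam *: u.

From HB Require Import structures.
From mathcomp Require Import all_boot all_order all_algebra.
From mathcomp Require Import all_classical all_reals all_analysis.
From mathcomp Require Import ring lra.
Import Order.TTheory GRing.Theory Num.Theory.
Import numFieldNormedType.Exports.
Local Open Scope classical_set_scope.
Local Open Scope ring_scope.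

(* Eventually the step sizes satisfy [lam n |A w_n - A y_n| <= c |w_n - y_n|]
   with [c = (1 + mu) / 2 < 1], because they converge to a positive limit while
   [mu_n -> 0]. Tseng's estimate then gives
   [|v_n - p|^2 <= |w_n - p|^2 - (1 - c^2) |w_n - y_n|^2] for the
   forward-backward-forward point [v_n = y_n - lam_n (A y_n - A w_n)].
   Substituted into the relaxed inertial update, condition (C3) turns
   [|x_n - p|^2 - a_n |x_(n-1) - p|^2 + d_n |x_n - x_(n-1)|^2] into a Lyapunov
   function decreasing by fixed multiples of [|x_(n+1) - x_n|^2] and
   [|w_n - y_n|^2]; both series are therefore summable, and the minimum of
   [|w_i - y_i|] over [N <= i <= n] is at most their root mean square. *)

Section InnerProduct.
Context {R : realType} {H : normedModType R} {ip : H -> H -> R}.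
Hypothesis ip_inner : is_inner_product ip.

Lemma inner_sym x y : ip x y = ip y x.
Proof. by case: ip_inner. Qed.

Lemma innerDl x y z : ip (x + y) z = ip x z + ip y z.
Proof. by case: ip_inner. Qed.

Lemma innerZl (c : R) x y : ip (c *: x) y = c * ip x y.
Proof. by case: ip_inner. Qed.

Lemma sqr_norm_inner x : `|x| ^+ 2 = ip x x.
Proof. by case: ip_inner => _ _ _ ->. Qed.

Lemma innerDr x y z : ip x (y + z) = ip x y + ip x z.
Proof. by rewrite !(inner_sym x) innerDl. Qed.

Lemma innerZr (c : R) x y : ip x (c *: y) = c * ip x y.
Proof. by rewrite !(inner_sym x) innerZl. Qed.

Lemma innerNl x y : ip (- x) y = - ip x y.
Proof. by rewrite -scaleN1r innerZl mulN1r. Qed.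

Lemma innerNr x y : ip x (- y) = - ip x y.
Proof. by rewrite -scaleN1r innerZr mulN1r. Qed.

Lemma innerBl x y z : ip (x - y) z = ip x z - ip y z.
Proof. by rewrite innerDl innerNl. Qed.

Lemma innerBr x y z : ip x (y - z) = ip x y - ip x z.
Proof. by rewrite innerDr innerNr. Qed.

Lemma inner_subr_eq0 x y : ip (x - y) (x - y) = 0 -> x = y.
Proof. by rewrite -sqr_norm_inner => /eqP; rewrite sqrf_eq0 normr_eq0 subr_eq0 => /eqP. Qed.

End InnerProduct.

Ltac inner_expand h := rewrite ?(sqr_norm_inner h)
  ?(innerDl h, innerDr h, innerBl h, innerBr h, innerZl h, innerZr h, innerNl h, innerNr h).

Lemma sqr_norm_sub_le {R : realType} {H : normedModType R} {ip : H -> H -> R} :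
  is_inner_product ip -> forall W Y D : H, 0 <= ip D Y ->
  `|W - D| ^+ 2 <= `|W| ^+ 2 - `|W - Y| ^+ 2 + `|D - (W - Y)| ^+ 2.
Proof.
move=> h W Y D hD; inner_expand h.
rewrite (inner_sym h W D) (inner_sym h Y W) (inner_sym h Y D); lra.
Qed.

(* The residual [w - (y - lam (A y - A w))] equals [lam (u + A y)] with
   [u \in B y], so monotonicity of [A] and [B] against the zero [p] makes it
   nonnegatively correlated with [y - p]. *)
Lemma tseng_step_le {R : realType} {H : normedModType R} {ip : H -> H -> R}
    {A : H -> H} {B : H -> set H} {p w y : H} {lam : R} :
  is_inner_product ip -> monotone_op ip A -> monotone_setop ip B ->
  zeros_sum A B p -> 0 < lam -> resolvent_rel B lam (w - lam *: A w) y ->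
  `|y - lam *: (A y - A w) - p| ^+ 2 <=
    `|w - p| ^+ 2 - `|w - y| ^+ 2 + lam ^+ 2 * `|A w - A y| ^+ 2.
Proof.
move=> h mA mB [u0 [Bpu0 Apu0]] lam0 [u [Byu wE]].
have u0E : u0 = - A p by apply/eqP; rewrite -addr_eq0 addrC Apu0.
have resE : w - (y - lam *: (A y - A w)) = lam *: (u + A y).
  apply/eqP; rewrite -subr_eq0.
  have -> : w - (y - lam *: (A y - A w)) - lam *: (u + A y)
            = (w - lam *: A w) - (y + lam *: u).
    by apply: (inner_subr_eq0 h); inner_expand h; ring.
  by rewrite wE subrr.
have res_mono : 0 <= ip (w - (y - lam *: (A y - A w))) (y - p).
  rewrite resE (innerZl h); apply: mulr_ge0; first exact: ltW.
  have -> : ip (u + A y) (y - p) = ip (u - u0) (y - p) + ip (A y - A p) (y - p).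
    by rewrite u0E; inner_expand h; ring.
  exact: addr_ge0 (mB _ _ _ _ Byu Bpu0) (mA y p).
move: (sqr_norm_sub_le h (w - p) (y - p) _ res_mono); inner_expand h => T.
inner_expand h; lra.
Qed.

Lemma tseng_step_contraction {R : realType} {H : normedModType R} {ip : H -> H -> R}
    {A : H -> H} {B : H -> set H} {p w y : H} {lam c : R} :
  is_inner_product ip -> monotone_op ip A -> monotone_setop ip B ->
  zeros_sum A B p -> 0 < lam -> resolvent_rel B lam (w - lam *: A w) y ->
  0 <= c -> lam * `|A w - A y| <= c * `|w - y| ->
  `|y - lam *: (A y - A w) - p| ^+ 2 <= `|w - p| ^+ 2 - (1 - c ^+ 2) * `|w - y| ^+ 2.
Proof.
move=> h mA mB Omega_p lam0 res c0 lam_c.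
have := tseng_step_le h mA mB Omega_p lam0 res.
have : lam ^+ 2 * `|A w - A y| ^+ 2 <= c ^+ 2 * `|w - y| ^+ 2.
  by rewrite -!exprMn !expr2; apply: ler_pM => //; apply: mulr_ge0 => //; exact: ltW.
lra.
Qed.

(* [r] stands for [(1 - t) / t]: the defect [t (1 - t) |v - z|^2] of the convex
   combination equals [r |x2 - z|^2], which is then split along [x2 - x1] and
   [x1 - x0]. *)
Lemma relaxed_inertial_step_le {R : realType} {H : normedModType R}
    {ip : H -> H -> R} {x0 x1 z x2 p v : H} {t al be del E r : R} :
  is_inner_product ip -> 0 < t -> t < 1 -> 0 <= be -> r * t = 1 - t ->
  z = x1 + be *: (x1 - x0) -> x2 = (1 - t) *: z + t *: v ->
  `|v - p| ^+ 2 <= `|x1 + al *: (x1 - x0) - p| ^+ 2 - del * E ->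
  `|x2 - p| ^+ 2 <=
    (1 + ((1 - t) * be + t * al)) * `|x1 - p| ^+ 2
    - ((1 - t) * be + t * al) * `|x0 - p| ^+ 2
    + ((1 - t) * be * (1 + be) + t * al * (1 + al)) * `|x1 - x0| ^+ 2
    - r * ((1 - be) * `|x2 - x1| ^+ 2 + (be ^+ 2 - be) * `|x1 - x0| ^+ 2)
    - t * del * E.
Proof.
move=> h t0 t1 be0 rt zE x2E hv; subst z x2.
set z := x1 + be *: (x1 - x0); set x2 := (1 - t) *: z + t *: v.
have S := inner_sym h.
have r0 : 0 <= r by nra.
have x2E : `|x2 - p| ^+ 2 =
    (1 - t) * `|z - p| ^+ 2 + t * `|v - p| ^+ 2 - t * (1 - t) * `|v - z| ^+ 2.
  rewrite /x2 /z; inner_expand h.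
  by rewrite ?(S x1 x0) ?(S p x0) ?(S v x0) ?(S p x1) ?(S v x1) ?(S v p); ring.
have zE : `|z - p| ^+ 2 = (1 + be) * `|x1 - p| ^+ 2 - be * `|x0 - p| ^+ 2
    + be * (1 + be) * `|x1 - x0| ^+ 2.
  by rewrite /z; inner_expand h; rewrite ?(S x1 x0) ?(S p x0) ?(S p x1); ring.
have wE : `|x1 + al *: (x1 - x0) - p| ^+ 2 = (1 + al) * `|x1 - p| ^+ 2
    - al * `|x0 - p| ^+ 2 + al * (1 + al) * `|x1 - x0| ^+ 2.
  by inner_expand h; rewrite ?(S x1 x0) ?(S p x0) ?(S p x1); ring.
have x2z : t * (1 - t) * `|v - z| ^+ 2 = r * `|x2 - z| ^+ 2.
  have -> : `|x2 - z| ^+ 2 = t ^+ 2 * `|v - z| ^+ 2.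
    rewrite /x2 /z; inner_expand h.
    by rewrite ?(S x1 x0) ?(S v x0) ?(S v x1); ring.
  by rewrite -rt; ring.
have x2z_split : `|x2 - z| ^+ 2 = (1 - be) * `|x2 - x1| ^+ 2
    + (be ^+ 2 - be) * `|x1 - x0| ^+ 2 + be * `|x2 - x1 - (x1 - x0)| ^+ 2.
  rewrite /x2 /z; inner_expand h.
  by rewrite ?(S x1 x0) ?(S v x0) ?(S v x1); ring.
have rem0 : 0 <= r * (be * `|x2 - x1 - (x1 - x0)| ^+ 2).
  by apply: mulr_ge0 => //; apply: mulr_ge0.
have tv : t * `|v - p| ^+ 2 <= t * (`|x1 + al *: (x1 - x0) - p| ^+ 2 - del * E).
  by rewrite ler_wpM2l // ltW.
rewrite wE in tv; rewrite x2E zE x2z x2z_split; lra.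
Qed.

Definition inertial_gap {R : realType} (e b : R) :=
  e ^+ 2 * (1 - b) ^+ 2 + e * (1 - 3 * b) - 2.

(* As a polynomial in [b], [inertial_gap e] has the roots
   [(3 + 2 e -+ sqrt (8 e + 17)) / (2 e)]. *)
Lemma inertial_gap_gt0 {R : realType} {e b : R} :
  1 < e -> 0 <= b -> b < (3 + 2 * e - Num.sqrt (8 * e + 17)) / (2 * e) ->
  0 < inertial_gap e b /\ b < 1.
Proof.
move=> e1 b0; rewrite ltr_pdivlMr; last by lra.
set s := Num.sqrt _ => bs.
have s0 : 0 <= s by exact: sqrtr_ge0.
have s2 : s ^+ 2 = 8 * e + 17 by rewrite sqr_sqrtr //; lra.
have s3 : 3 < s by nra.
split; last by nra.
have lo : 0 < 3 + 2 * e - s - b * (2 * e) by lra.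
have hi : 0 < 3 + 2 * e + s - b * (2 * e) by lra.
have lohi := mulr_gt0 lo hi; rewrite /inertial_gap; nra.
Qed.

Lemma inertial_gap_le_b {R : realType} {e b b' : R} :
  0 <= e -> b <= b' -> b + b' <= 2 -> inertial_gap e b' <= inertial_gap e b.
Proof.
move=> e0 bb' bb2; rewrite -subr_ge0.
have -> : inertial_gap e b - inertial_gap e b' =
          (b' - b) * (e ^+ 2 * (2 - b - b') + 3 * e) by rewrite /inertial_gap; ring.
have e2b : 0 <= e ^+ 2 * (2 - b - b') by apply: mulr_ge0; [exact: sqr_ge0 | lra].
apply: mulr_ge0; lra.
Qed.

Lemma inertial_gap_le_e {R : realType} {e e' b : R} :
  0 < e -> e <= e' -> 0 < inertial_gap e b -> inertial_gap e b <= inertial_gap e' b.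
Proof.
rewrite /inertial_gap => e0 ee' g0.
have k : 0 < e * (1 - b) ^+ 2 + (1 - 3 * b).
  by rewrite -(pmulr_rgt0 _ e0); nra.
have : 0 <= (e' - e) * ((e' + e) * (1 - b) ^+ 2 + 1 - 3 * b).
  apply: mulr_ge0; first lra.
  have : 0 <= e' * (1 - b) ^+ 2 by apply: mulr_ge0; [lra | exact: sqr_ge0].
  lra.
have -> : (e' - e) * ((e' + e) * (1 - b) ^+ 2 + 1 - 3 * b) =
    e' ^+ 2 * (1 - b) ^+ 2 + e' * (1 - 3 * b) - 2 -
    (e ^+ 2 * (1 - b) ^+ 2 + e * (1 - 3 * b) - 2) by ring.
lra.
Qed.

(* [r = (1 - t) / t] and [r' = (1 - t') / t']; [t' <= 1 / (1 + e)] gives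
   [e <= r'], and the key identity is
   [r' (1 - b')^2 - (1 - t') b' (1 + b') - 2 t' = t' * inertial_gap r' b']. *)
Lemma descent_margin {R : realType} {e bb b b' t t' r r' al' th : R} :
  1 < e -> 0 <= b -> b <= b' -> b' <= bb -> bb < 1 -> 0 < inertial_gap e bb ->
  0 < th -> th < t -> t <= t' -> t' <= 1 / (1 + e) ->
  r * t = 1 - t -> r' * t' = 1 - t' -> 0 <= al' <= 1 ->
  (1 - t') * b' * (1 + b') + t' * al' * (1 + al') + r' * b' * (1 - b')
  <= r * (1 - b) - th * inertial_gap e bb.
Proof.
move=> e1 b0 bb' b'bb bb1 g0 th0 tht tt' t'e rt r't /andP[al0 al1].
have t'0 : 0 < t' by lra.
have r'e : e <= r'.
  have : t' * (1 + e) <= 1 by rewrite -ler_pdivlMr //; lra.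
  nra.
have r'r : r' <= r.
  have : (r - r') * (t * t') = t' - t by rewrite mulrBl; nra.
  have : 0 < t * t' by nra.
  nra.
have gap_r' : r' * (1 - b') ^+ 2 - (1 - t') * b' * (1 + b') - 2 * t'
              = t' * inertial_gap r' b'.
  apply/eqP; rewrite -subr_eq0.
  have -> : r' * (1 - b') ^+ 2 - (1 - t') * b' * (1 + b') - 2 * t'
            - t' * inertial_gap r' b'
      = (r' * t' - (1 - t')) * ((1 - b') ^+ 2 - r' * (1 - b') ^+ 2 - 1 + 3 * b').
    by rewrite /inertial_gap; ring.
  by rewrite r't subrr mul0r.
have gap_mono : th * inertial_gap e bb <= t' * inertial_gap r' b'.
  have g1 := @inertial_gap_le_e _ e r' bb ltac:(lra) r'e g0.
  have g2 := @inertial_gap_le_b _ r' b' bb ltac:(lra) b'bb ltac:(lra).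
  have : th * inertial_gap e bb <= t' * inertial_gap e bb by rewrite ler_wpM2r //; lra.
  have : t' * inertial_gap e bb <= t' * inertial_gap r' b'.
    by rewrite ler_wpM2l //; [lra | exact: le_trans g2].
  lra.
have : r' * (1 - b') <= r * (1 - b) by nra.
have : t' * al' * (1 + al') <= 2 * t' by nra.
have : r' * b' * (1 - b') + r' * (1 - b') ^+ 2 = r' * (1 - b') by ring.
lra.
Qed.

Lemma inertia_bounds {R : realType} {e bb th t b al r : R} :
  1 < e -> 0 < th -> th < t -> t <= 1 / (1 + e) -> 0 <= b -> b <= bb -> bb < 1 ->
  0 <= al <= 1 -> r * t = 1 - t ->
  0 <= (1 - t) * b + t * al <= bb + (1 - bb) / (1 + e) /\
  0 <= (1 - t) * b * (1 + b) + t * al * (1 + al) + r * b * (1 - b).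
Proof.
move=> e1 th0 tht te b0 bbb bb1 /andP[al0 al1] rt.
have t1 : t < 1.
  by apply: le_lt_trans te _; rewrite ltr_pdivrMr; lra.
have r0 : 0 <= r by nra.
split; first (apply/andP; split).
- by apply: addr_ge0; apply: mulr_ge0; lra.
- have : t * (1 - bb) <= 1 / (1 + e) * (1 - bb) by rewrite ler_wpM2r //; lra.
  have : (1 - t) * b <= (1 - t) * bb by rewrite ler_wpM2l //; lra.
  have : t * al <= t by rewrite ler_piMr //; lra.
  rewrite mul1r mulrC; lra.
- have : 0 <= r * b * (1 - b) by apply: mulr_ge0; [apply: mulr_ge0 | lra].
  have : 0 <= (1 - t) * b * (1 + b) by apply: mulr_ge0; [apply: mulr_ge0 | ]; lra.
  have : 0 <= t * al * (1 + al) by apply: mulr_ge0; [apply: mulr_ge0 | ]; lra.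
  lra.
Qed.

Lemma rate_constant_bounds {R : realType} {e : R} : 1 < e ->
  0 <= (5 + 2 * e - Num.sqrt (8 * e + 17)) / (2 + 2 * e) < 1.
Proof.
move=> e1; set s := Num.sqrt _.
have s0 : 0 <= s by exact: sqrtr_ge0.
have s2 : s ^+ 2 = 8 * e + 17 by rewrite sqr_sqrtr //; lra.
have e0 : 0 < 2 + 2 * e by lra.
apply/andP; split; first by apply: divr_ge0; nra.
by rewrite ltr_pdivrMr //; nra.
Qed.

Section StepSize.
Context {R : realType} {H : normedModType R} {A : H -> H} {w y : nat -> H}.
Context {mu : R} {mu_ p_ lam : nat -> R}.
Hypothesis mu01 : 0 < mu < 1.
Hypothesis mu_ge0 : forall n, 0 <= mu_ n.
Hypothesis p_ge0 : forall n, 0 <= p_ n.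
Hypothesis lam_rec : forall n, (1 <= n)%N ->
  lam n.+1 = if A (w n) != A (y n)
             then Num.min ((mu_ n + mu) * `|w n - y n| / `|A (w n) - A (y n)|)
                          (lam n + p_ n)
             else lam n + p_ n.

Lemma stepsize_le_add n : (1 <= n)%N -> lam n.+1 <= lam n + p_ n.
Proof. by move=> n1; rewrite lam_rec //; case: ifP; rewrite ?ge_min ?lexx ?orbT. Qed.

Lemma stepsize_lower_bound {L : R} : lipschitz_op L A -> 0 < lam 1%N ->
  exists2 m, 0 < m & forall n, m <= lam n.+1.
Proof.
move: mu01 => /andP[mu0 _] A_lip lam1_gt0; set K := Num.max L 1.
have K1 : 1 <= K by rewrite le_max lexx orbT.
exists (Num.min (lam 1%N) (mu / K)); first by rewrite lt_min lam1_gt0 divr_gt0 //; lra.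
elim=> [|n IH]; first by rewrite ge_min lexx.
rewrite (lam_rec n.+1 isT); case: ifPn => [AwAy|_]; last by have := p_ge0 n.+1; lra.
rewrite le_min; apply/andP; split; last by have := p_ge0 n.+1; lra.
apply: (@le_trans _ _ (mu / K)); first by rewrite ge_min lexx orbT.
have Ad0 : 0 < `|A (w n.+1) - A (y n.+1)| by rewrite normr_gt0 subr_eq0.
have AdK : `|A (w n.+1) - A (y n.+1)| <= K * `|w n.+1 - y n.+1|.
  by apply: le_trans (A_lip _ _) _; rewrite ler_wpM2r // le_max lexx.
rewrite ler_pdivrMr ?(lt_le_trans ltr01) // mulrAC ler_pdivlMr //.
have := mu_ge0 n.+1; nra.
Qed.

(* [lam n.+1 - series p_ n.+1] is nonincreasing and bounded below. *)
Lemma stepsize_cvg {m : R} : 0 < m -> (forall n, m <= lam n.+1) ->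
  cvgn (series p_) -> exists2 l : R, 0 < l & lam @ \oo --> l.
Proof.
move=> m0 lam_ge p_sum; set s := fun n => lam n.+1 - series p_ n.+1.
have s_noninc : nonincreasing_seq s.
  apply/nonincreasing_seqP => n; rewrite /s seriesSr.
  by have := stepsize_le_add n.+1 isT; lra.
have ser_nondec : nondecreasing_seq (series p_).
  by apply/nondecreasing_seqP => n; rewrite seriesSr lerDl.
have s_lb : has_lbound (range s).
  exists (m - limn (series p_)) => _ [n _ <-]; rewrite /s.
  have := nondecreasing_cvgn_le ser_nondec p_sum n.+1; have := lam_ge n; lra.
have lam_cvg : lam @ \oo --> limn s + limn (series p_).
  rewrite -cvg_shiftS.
  have -> : [sequence lam n.+1]_n = s \+ (fun n => series p_ n.+1).
    by apply/funext => n /=; rewrite /s subrK.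
  by apply: cvgD; [exact: nonincreasing_is_cvgn | rewrite cvg_shiftS].
exists (limn s + limn (series p_)) => //; apply: lt_le_trans m0 _.
rewrite -(cvg_lim _ lam_cvg) //; apply: limr_ge.
  by apply/cvg_ex; eexists; exact: lam_cvg.
by exists 1%N => // -[|n] //= _; exact: lam_ge.
Qed.

(* [lam n.+1 / lam n -> 1] and [mu_ n -> 0], so [lam n (mu_ n + mu)] eventually
   drops below [(1 + mu) / 2 * lam n.+1]. *)
Lemma stepsize_eventually_contracting {l : R} :
  (forall n, (1 <= n)%N -> 0 < lam n) -> 0 < l -> lam @ \oo --> l ->
  mu_ @ \oo --> (0 : R) ->
  exists2 N, (1 <= N)%N & forall n, (N <= n)%N ->
    lam n * `|A (w n) - A (y n)| <= (1 + mu) / 2 * `|w n - y n|.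
Proof.
move: mu01 => /andP[mu0 mu1] lam_gt0 l0 lam_cvg mu_cvg; set c := (1 + mu) / 2.
have gap_cvg : (fun n => c * lam n.+1 - lam n * (mu_ n + mu)) @ \oo
               --> c * l - l * (0 + mu).
  apply: cvgB; first by apply: cvgM; [exact: cvg_cst | rewrite cvg_shiftS].
  by apply: cvgM => //; apply: cvgD => //; exact: cvg_cst.
have [|N1 _ HN1] := cvgr_gt _ gap_cvg 0; first by rewrite add0r /c; nra.
exists (maxn N1 1); first by rewrite leq_maxr.
move=> n; rewrite geq_max => /andP[nN1 n1]; have := HN1 n nN1 => /= hgap.
have ln0 := lam_gt0 n n1; have ln1 := lam_gt0 n.+1 isT.
have := lam_rec n n1; case: ifPn => [AwAy lamE|]; last first.
  rewrite negbK => /eqP -> _; rewrite subrr normr0 mulr0.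
  by apply: mulr_ge0 => //; rewrite /c; lra.
have Ad0 : 0 < `|A (w n) - A (y n)| by rewrite normr_gt0 subr_eq0.
have : lam n.+1 <= (mu_ n + mu) * `|w n - y n| / `|A (w n) - A (y n)|.
  by rewrite lamE ge_min lexx.
rewrite ler_pdivlMr // => lamAd.
have d0 : 0 <= `|w n - y n| by [].
rewrite -(ler_pM2l ln1); nra.
Qed.

End StepSize.
Lemma telescope_le {R : realType} (G u : nat -> R) (N : nat) :
  (forall n, (N <= n)%N -> G n.+1 + u n <= G n) ->
  forall n, (N <= n)%N -> G n.+1 + \sum_(N <= i < n.+1) u i <= G N.
Proof.
move=> Gdec n /subnKC <-; elim: (n - N)%N => [|k IH].
  by rewrite addn0 big_nat1; exact: Gdec.
rewrite addnS big_nat_recr /=; last by rewrite leqW // leq_addr.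
by have := Gdec (N + k).+1 (leqW (leq_addr _ _)); lra.
Qed.

Lemma bounded_of_le_affine {R : realType} (u a : nat -> R) (G abar : R) :
  abar < 1 -> (forall k, 0 <= a k <= abar) ->
  (forall k, u k.+1 <= G + a k * u k) ->
  forall k, u k <= Num.max (u 0%N) (Num.max G 0 / (1 - abar)).
Proof.
move=> abar1 a_bd u_rec; set Bd := Num.max _ _.
have GBd : G + abar * Bd <= Bd.
  have : Num.max G 0 / (1 - abar) <= Bd by rewrite le_max lexx orbT.
  rewrite ler_pdivrMr; last by lra.
  have : G <= Num.max G 0 by rewrite le_max lexx.
  lra.
have Bd0 : 0 <= Bd.
  by rewrite le_max; apply/orP; right; apply: divr_ge0; rewrite ?le_max ?lexx ?orbT; lra.
elim=> [|k IH]; first by rewrite le_max lexx.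
have /andP[a0 a1] := a_bd k.
apply: le_trans (u_rec k) _; apply: le_trans GBd; rewrite lerD2l.
by apply: le_trans (ler_wpM2l a0 IH) _; rewrite ler_wpM2r.
Qed.

(* Since [aa k <= abar < 1], the descent of [G k] keeps [phi] bounded, and
   telescoping then bounds the sums of the decrements. *)
Lemma lyapunov_sums_bounded {R : realType} (phi D E aa cc : nat -> R) (N : nat)
    (sig c abar : R) :
  (1 <= N)%N -> 0 < sig -> 0 < c -> abar < 1 ->
  (forall k, 0 <= phi k) -> (forall k, 0 <= D k) -> (forall k, 0 <= E k) ->
  (forall k, (1 <= k)%N -> 0 <= aa k <= abar) -> (forall k, (1 <= k)%N -> 0 <= cc k) ->
  (forall n, (N <= n)%N ->
     phi n.+1 - aa n.+1 * phi n + cc n.+1 * D n.+1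
     <= phi n - aa n * phi n.-1 + cc n * D n - sig * D n.+1 - c * E n) ->
  exists2 T, 0 <= T & forall m, (N <= m)%N ->
    \sum_(N <= i < m.+1) D i.+1 <= T / sig /\ \sum_(N <= i < m.+1) E i <= T / c.
Proof.
move=> N1 sig0 c0 abar1 phi0 D0 E0 aa_bd cc0 descent.
set G := fun k => phi k - aa k * phi k.-1 + cc k * D k.
set dec := fun i => sig * D i.+1 + c * E i.
have dec0 i : 0 <= dec i by apply: addr_ge0; apply: mulr_ge0 => //; exact: ltW.
have tele : forall n, (N <= n)%N -> G n.+1 + \sum_(N <= i < n.+1) dec i <= G N.
  by apply: telescope_le => n Nn; have := descent n Nn; rewrite /G /dec; lra.
have G_lower k : (1 <= k)%N -> phi k - aa k * phi k.-1 <= G k.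
  by move=> k1; have := mulr_ge0 (cc0 k k1) (D0 k); rewrite /G; lra.
have G_le k : G (N + k)%N <= G N.
  case: k => [|k]; first by rewrite addn0.
  rewrite addnS; have := tele _ (leq_addr k N).
  have : 0 <= \sum_(N <= i < (N + k).+1) dec i by apply: sumr_ge0.
  lra.
have aN k : 0 <= aa (N + k)%N <= abar by apply: aa_bd; rewrite (leq_trans N1) ?leq_addr.
set Bd := Num.max (phi N.-1) (Num.max (G N) 0 / (1 - abar)).
have phi_bd k : phi (N + k).-1 <= Bd.
  have := @bounded_of_le_affine R (fun k => phi (N + k).-1) (fun k => aa (N + k)%N)
    (G N) abar abar1 aN.
  rewrite /= addn0; apply=> j; rewrite addnS /=.
  have := G_lower (N + j)%N (leq_trans N1 (leq_addr _ _)); have := G_le j; lra.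
have sum_le m : (N <= m)%N -> \sum_(N <= i < m.+1) dec i <= G N + abar * Bd.
  move=> Nm; have := tele m Nm; have /= := G_lower m.+1 isT; have := phi0 m.+1.
  have /andP[a0 a1] : 0 <= aa m.+1 <= abar by exact: aa_bd.
  have := phi_bd (m - N).+1; rewrite addnS subnKC //= => phiB.
  have : aa m.+1 * phi m <= abar * Bd.
    by apply: le_trans (ler_wpM2l a0 phiB) _; rewrite ler_wpM2r // (le_trans (phi0 m)).
  lra.
exists (G N + abar * Bd).
  by apply: le_trans (sum_le N (leqnn N)); exact: sumr_ge0.
move=> m Nm; have := sum_le m Nm; rewrite /dec big_split /= -!mulr_sumr => hS.
have : 0 <= sig * \sum_(N <= i < m.+1) D i.+1.
  by apply: mulr_ge0; [exact: ltW | exact: sumr_ge0].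
have : 0 <= c * \sum_(N <= i < m.+1) E i.
  by apply: mulr_ge0; [exact: ltW | exact: sumr_ge0].
by split; rewrite ler_pdivlMr //; lra.
Qed.

Lemma bigmin_le_sqrt_mean {R : realType} (F : nat -> R) (N n : nat) (Q : R) :
  (N <= n)%N -> (forall i, 0 <= F i) -> \sum_(N <= i < n.+1) F i ^+ 2 <= Q ->
  \big[Num.min/F N]_(N <= i < n.+1) F i <= Num.sqrt (Q / (n - N + 1)%:R).
Proof.
move=> Nn F0 sumQ; set mn := \big[Num.min/F N]_(N <= i < n.+1) F i.
have mn0 : 0 <= mn by apply: le_bigmin.
have k0 : 0 < (n - N + 1)%:R :> R by rewrite ltr0n addn1.
have mn_sum : (n - N + 1)%:R * mn ^+ 2 <= \sum_(N <= i < n.+1) F i ^+ 2.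
  rewrite mulr_natl addn1 -subSn // -sumr_const_nat big_nat [leRHS]big_nat.
  apply: ler_sum => i /andP[Ni iN]; rewrite !expr2.
  by apply: ler_pM => //; apply: ge_bigmin_seq; rewrite // mem_index_iota Ni.
rewrite -(ger0_norm mn0) -sqrtr_sqr ler_sqrt; last first.
  by apply: divr_ge0; [apply: le_trans (sumr_ge0 _ _) sumQ => i _; exact: sqr_ge0 | lra].
by rewrite ler_pdivlMr //; lra.
Qed.

Lemma nneseries_le_of_tail_sums {R : realType} (u : nat -> R) (N : nat) (T : R) :
  (1 <= N)%N -> (forall k, 0 <= u k) ->
  (forall m, (N <= m)%N -> \sum_(N <= i < m.+1) u i <= T) ->
  (\sum_(1 <= k <oo) (u k)%:E <= (\sum_(1 <= k < N) u k + T)%:E)%E.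
Proof.
move=> N1 u0 tail; apply: lime_le.
  by apply: is_cvg_nneseries => k _ _; rewrite lee_fin.
apply: nearW => n /=; rewrite sumEFin lee_fin.
set n' := maxn n N.+1.
have nn' : \sum_(1 <= k < n) u k <= \sum_(1 <= k < n') u k.
  case: n => [|n] in n' *; first by rewrite big_geq //; exact: sumr_ge0.
  rewrite (@big_cat_nat _ _ _ n.+1 1 n') //= ?leq_maxl // lerDl; exact: sumr_ge0.
apply: le_trans nn' _.
have Nn' : (N < n')%N by rewrite leq_max ltnSn orbT.
rewrite (@big_cat_nat _ _ _ N 1 n') ?(ltnW Nn') //= lerD2l -(prednK (ltn_trans N1 Nn')).
by apply: tail; rewrite -ltnS prednK // (leq_ltn_trans _ Nn').
Qed.

(* [M] is chosen so large that the [M]-term of the bound alone dominates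
   [\sum_i |w i - y i|^2]; the other terms are nonnegative. *)
Lemma rate_of_bounded_sums {R : realType} {H : normedModType R} {x w y : nat -> H}
    {N : nat} {T1 T2 mu theta a : R} :
  (1 <= N)%N -> 0 <= T1 -> 0 < theta < 1 -> 0 < mu < 1 -> 0 <= a < 1 ->
  (forall m, (N <= m)%N -> \sum_(N <= i < m.+1) `|x i.+1 - x i| ^+ 2 <= T1) ->
  (forall m, (N <= m)%N -> \sum_(N <= i < m.+1) `|w i - y i| ^+ 2 <= T2) ->
  exists M : R, 0 <= M /\
    (\sum_(1 <= k <oo) ((`|x k.+1 - x k| ^+ 2)%:E) <= M%:E)%E /\
    forall (q : H) n, (N <= n)%N ->
      \big[Num.min/`|w N - y N|]_(N <= i < n.+1) `|w i - y i| <=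
      Num.sqrt (((`|x N - q| ^+ 2
                 + a / (1 - a) * Num.max (`|x N - q| ^+ 2 - `|x N.-1 - q| ^+ 2) 0
                 + (2 + (1 - theta) / (4 * theta)) * M / (1 - a))
                 * (1 / (theta * (1 - mu))))
                / (n - N + 1)%:R).
Proof.
move=> N1 T10 /andP[th0 th1] /andP[mu0 mu1] /andP[a0 a1] sumD sumE.
set S := \sum_(1 <= k < N) `|x k.+1 - x k| ^+ 2 + T1.
have S0 : 0 <= S by apply: addr_ge0 => //; apply: sumr_ge0 => i _; exact: sqr_ge0.
set X := 2 + (1 - theta) / (4 * theta).
have X0 : 0 < X.
  have : 0 <= (1 - theta) / (4 * theta) by apply: divr_ge0; lra.
  rewrite /X; lra.
have c0 : 0 < 1 / (theta * (1 - mu)) by apply: divr_gt0 => //; apply: mulr_gt0; lra.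
set kap := X / (1 - a) * (1 / (theta * (1 - mu))).
have kap0 : 0 < kap by apply: mulr_gt0 => //; apply: divr_gt0; lra.
exists (Num.max S (T2 / kap)).
have SM : S <= Num.max S (T2 / kap) by rewrite le_max lexx.
have T2M : T2 <= kap * Num.max S (T2 / kap).
  have : T2 / kap <= Num.max S (T2 / kap) by rewrite le_max lexx orbT.
  by rewrite ler_pdivrMr // mulrC.
split; first exact: le_trans SM.
split.
  apply: le_trans (nneseries_le_of_tail_sums _ _ _ N1 (fun k => sqr_ge0 _) sumD) _.
  by rewrite lee_fin.
move=> q n Nn; apply: bigmin_le_sqrt_mean => //; apply: le_trans (sumE n Nn) _.
set P := `|x N - q| ^+ 2 + _.
have -> : (P + X * Num.max S (T2 / kap) / (1 - a)) * (1 / (theta * (1 - mu)))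
          = P * (1 / (theta * (1 - mu))) + kap * Num.max S (T2 / kap) by rewrite /kap; ring.
have : 0 <= P * (1 / (theta * (1 - mu))).
  apply: mulr_ge0 (ltW c0); apply: addr_ge0; first exact: sqr_ge0.
  by apply: mulr_ge0; [apply: divr_ge0; lra | rewrite le_max lexx orbT].
lra.
Qed.

Section InertialDescent.
Context {R : realType} {H : normedModType R} {ip : H -> H -> R}.
Context {eps beta theta del : R} {alpha beta_ theta_ E : nat -> R}.
Context {x w z v : nat -> H} {p : H} {N0 : nat}.
Hypothesis ip_inner : is_inner_product ip.
Hypothesis eps_gt1 : 1 < eps.
Hypothesis alpha01 : forall n, (1 <= n)%N -> 0 <= alpha n <= 1.
Hypothesis beta_mono : forall n, (1 <= n)%N -> 0 <= beta_ n /\ beta_ n <= beta_ n.+1.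
Hypothesis beta_le : forall n, (1 <= n)%N -> beta_ n <= beta.
Hypothesis beta_lt : beta < (3 + 2 * eps - Num.sqrt (8 * eps + 17)) / (2 * eps).
Hypothesis theta_gt0 : 0 < theta.
Hypothesis theta_bd : forall n, (1 <= n)%N ->
  theta < theta_ n /\ theta_ n <= theta_ n.+1 /\ theta_ n.+1 <= 1 / (1 + eps).
Hypothesis inertia_mono : forall n, (1 <= n)%N ->
  (1 - theta_ n) * beta_ n + theta_ n * alpha n <=
  (1 - theta_ n.+1) * beta_ n.+1 + theta_ n.+1 * alpha n.+1.
Hypothesis w_def : forall n, (1 <= n)%N -> w n = x n + alpha n *: (x n - x n.-1).
Hypothesis z_def : forall n, (1 <= n)%N -> z n = x n + beta_ n *: (x n - x n.-1).
Hypothesis x_def : forall n, (1 <= n)%N -> x n.+1 = (1 - theta_ n) *: z n + theta_ n *: v n.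
Hypothesis del_gt0 : 0 < del.
Hypothesis E_ge0 : forall n, 0 <= E n.
Hypothesis N0_ge1 : (1 <= N0)%N.
Hypothesis v_contr : forall n, (N0 <= n)%N ->
  `|v n - p| ^+ 2 <= `|w n - p| ^+ 2 - del * E n.

Let phi k := `|x k - p| ^+ 2.
Let D k := `|x k - x k.-1| ^+ 2.
Let aa k := (1 - theta_ k) * beta_ k + theta_ k * alpha k.
Let rr k := (1 - theta_ k) / theta_ k.
Let cc k := (1 - theta_ k) * beta_ k * (1 + beta_ k) + theta_ k * alpha k * (1 + alpha k)
  + rr k * beta_ k * (1 - beta_ k).

Let theta_bounds k : (1 <= k)%N ->
  [/\ theta < theta_ k, theta_ k <= theta_ k.+1, theta_ k.+1 <= 1 / (1 + eps)
    & theta_ k <= 1 / (1 + eps)].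
Proof. by move=> k1; have [? [? t2]] := theta_bd k k1; split => //; exact: le_trans t2. Qed.

Let rr_theta k : (1 <= k)%N -> rr k * theta_ k = 1 - theta_ k.
Proof.
move=> k1; have [th_k _ _ _] := theta_bounds k k1.
by rewrite /rr divfK // gt_eqF // (lt_trans theta_gt0).
Qed.

Let beta_ge0 : 0 <= beta.
Proof. by have [? ?] := beta_mono 1%N isT; have := beta_le 1%N isT; lra. Qed.

Let coefs_bounds k : (1 <= k)%N ->
  0 <= aa k <= beta + (1 - beta) / (1 + eps) /\ 0 <= cc k.
Proof.
move=> k1; have [th_k _ _ th_k'] := theta_bounds k k1; have [b0 _] := beta_mono k k1.
have [_ bb1] := inertial_gap_gt0 eps_gt1 beta_ge0 beta_lt.
exact: inertia_bounds eps_gt1 theta_gt0 th_k th_k' b0 (beta_le k k1) bb1 (alpha01 k k1)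
  (rr_theta k k1).
Qed.

Lemma inertial_descent n : (N0 <= n)%N ->
  phi n.+1 - aa n.+1 * phi n + cc n.+1 * D n.+1
  <= phi n - aa n * phi n.-1 + cc n * D n
     - theta * inertial_gap eps beta * D n.+1 - theta * del * E n.
Proof.
move=> N0n; have n1 : (1 <= n)%N := leq_trans N0_ge1 N0n.
have [th_n th_nS th_nS' th_n'] := theta_bounds n n1.
have [b0 b1] := beta_mono n n1.
have [g0 bb1] := inertial_gap_gt0 eps_gt1 beta_ge0 beta_lt.
have th_n0 : 0 < theta_ n by exact: lt_trans th_n.
have th_n1 : theta_ n < 1.
  (* [lra] ignores section hypotheses, hence the local copy. *)
  have e1 := eps_gt1.
  by apply: le_lt_trans th_n' _; rewrite ltr_pdivrMr; lra.
have hv := v_contr n N0n; rewrite [in w n - p](w_def n n1) in hv.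
have step := relaxed_inertial_step_le ip_inner th_n0 th_n1 b0 (rr_theta n n1)
  (z_def n n1) (x_def n n1) hv.
have margin := descent_margin eps_gt1 b0 b1 (beta_le n.+1 isT) bb1 g0
  theta_gt0 th_n th_nS th_nS' (rr_theta n n1) (rr_theta n.+1 isT)
  (alpha01 n.+1 isT).
have phi0 : 0 <= phi n by exact: sqr_ge0.
have D0 : 0 <= D n.+1 by exact: sqr_ge0.
have : aa n * phi n <= aa n.+1 * phi n by rewrite ler_wpM2r // inertia_mono.
have : cc n.+1 * D n.+1
       <= (rr n * (1 - beta_ n) - theta * inertial_gap eps beta) * D n.+1.
  by rewrite ler_wpM2r.
have : theta * del * E n <= theta_ n * del * E n.
  by rewrite ler_wpM2r // ler_wpM2r ?ltW.
move: step margin; rewrite /phi /D /aa /cc /=; lra.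
Qed.

Lemma inertial_sums_bounded : exists T1 T2, 0 <= T1 /\
  forall m, (N0 <= m)%N ->
    \sum_(N0 <= i < m.+1) `|x i.+1 - x i| ^+ 2 <= T1 /\ \sum_(N0 <= i < m.+1) E i <= T2.
Proof.
have [g0 bb1] := inertial_gap_gt0 eps_gt1 beta_ge0 beta_lt.
have abar1 : beta + (1 - beta) / (1 + eps) < 1.
  have e1 := eps_gt1.
  have : (1 - beta) / (1 + eps) < 1 - beta by rewrite ltr_pdivrMr; nra.
  lra.
have [T T0 sums] := @lyapunov_sums_bounded _ phi D E aa cc N0 _ _ _ N0_ge1
  (mulr_gt0 theta_gt0 g0) (mulr_gt0 theta_gt0 del_gt0) abar1
  (fun k => sqr_ge0 _) (fun k => sqr_ge0 _) E_ge0
  (fun k k1 => (coefs_bounds k k1).1) (fun k k1 => (coefs_bounds k k1).2)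
  inertial_descent.
exists (T / (theta * inertial_gap eps beta)), (T / (theta * del)); split.
  by apply: divr_ge0 => //; apply/ltW/mulr_gt0.
exact: sums.
Qed.

End InertialDescent.

Theorem theorem3p2 (R : realType) (H : completeNormedModType R)
  (ip : H -> H -> R) (A : H -> H) (B : H -> set H) (L : R)
  (mu lam1 eps beta theta : R)
  (alpha beta_ theta_ mu_ p_ lam : nat -> R) (x w z y : nat -> H) :
  is_inner_product ip ->
  (* (C1) *)
  zeros_sum A B !=set0 ->
  (* (C2) *)
  lipschitz_op L A -> monotone_op ip A -> maximal_monotone ip B ->
  (* parameters *)
  0 < mu < 1 -> 0 < lam1 ->
  (forall n, 0 <= mu_ n) -> (forall n, 0 <= p_ n) ->
  (* (C3) *)
  1 < eps ->
  (forall n, (1 <= n)%N -> 0 <= alpha n <= 1) ->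
  (forall n, (1 <= n)%N -> 0 <= beta_ n /\ beta_ n <= beta_ n.+1) ->
  (forall n, (1 <= n)%N -> beta_ n <= beta) ->
  beta < (3 + 2 * eps - Num.sqrt (8 * eps + 17)) / (2 * eps) ->
  0 < theta ->
  (forall n, (1 <= n)%N ->
     theta < theta_ n /\ theta_ n <= theta_ n.+1 /\
     theta_ n.+1 <= 1 / (1 + eps)) ->
  (forall n, (1 <= n)%N ->
     (1 - theta_ n) * beta_ n + theta_ n * alpha n <=
     (1 - theta_ n.+1) * beta_ n.+1 + theta_ n.+1 * alpha n.+1) ->
  cvgn (series p_) ->
  mu_ @ \oo --> (0 : R) ->
  (* Algorithm 3.1 *)
  lam 1%N = lam1 ->
  (forall n, (1 <= n)%N -> w n = x n + alpha n *: (x n - x n.-1)) ->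
  (forall n, (1 <= n)%N -> z n = x n + beta_ n *: (x n - x n.-1)) ->
  (forall n, (1 <= n)%N -> resolvent_rel B (lam n) (w n - lam n *: A (w n)) (y n)) ->
  (forall n, (1 <= n)%N ->
     lam n.+1 = if A (w n) != A (y n)
                then Num.min ((mu_ n + mu) * `|w n - y n| / `|A (w n) - A (y n)|)
                             (lam n + p_ n)
                else lam n + p_ n) ->
  (* the algorithm does not stop *)
  (forall n, (1 <= n)%N -> w n != y n) ->
  (forall n, (1 <= n)%N ->
     x n.+1 = (1 - theta_ n) *: z n
              + theta_ n *: (y n - lam n *: (A (y n) - A (w n)))) ->
  let a := (5 + 2 * eps - Num.sqrt (8 * eps + 17)) / (2 + 2 * eps) in
  exists (N : nat) (M : R),
    (1 <= N)%N /\ 0 <= M /\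
    (\sum_(1 <= k <oo) ((`|x k.+1 - x k| ^+ 2)%:E) <= M%:E)%E /\
    forall q, zeros_sum A B q -> forall n, (N <= n)%N ->
      \big[Num.min/`|w N - y N|]_(N <= i < n.+1) `|w i - y i| <=
      Num.sqrt (((`|x N - q| ^+ 2
                 + a / (1 - a) * Num.max (`|x N - q| ^+ 2 - `|x N.-1 - q| ^+ 2) 0
                 + (2 + (1 - theta) / (4 * theta)) * M / (1 - a))
                 * (1 / (theta * (1 - mu))))
                / (n - N + 1)%:R).
Proof.
move=> ip_inner [p Omega_p] A_lip A_mono [B_mono _] mu01 lam1_gt0 mu_ge0 p_ge0 eps_gt1
  alpha01 beta_mono beta_le beta_lt theta_gt0 theta_bd inertia_mono p_sum mu_cvg lam_1
  w_def z_def y_res lam_rec _ x_def a.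
have lam1_pos : 0 < lam 1%N by rewrite lam_1.
have [m m0 lam_ge] := stepsize_lower_bound mu01 mu_ge0 p_ge0 lam_rec A_lip lam1_pos.
have lam_gt0 n : (1 <= n)%N -> 0 < lam n by case: n => // n _; exact: lt_le_trans (lam_ge n).
have [l l0 lam_cvg] := stepsize_cvg p_ge0 lam_rec m0 lam_ge p_sum.
have [N N1 lam_contr] :=
  stepsize_eventually_contracting mu01 lam_rec lam_gt0 l0 lam_cvg mu_cvg.
set c := (1 + mu) / 2.
have c0 : 0 <= c by rewrite /c; lra.
have del_gt0 : 0 < 1 - c ^+ 2 by rewrite /c; nra.
have [T1 [T2 [T10 sums]]] := inertial_sums_bounded ip_inner eps_gt1 alpha01 beta_mono
  beta_le beta_lt theta_gt0 theta_bd inertia_mono w_def z_def x_def del_gt0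
  (fun n => sqr_ge0 `|w n - y n|) N1
  (fun n Nn => tseng_step_contraction ip_inner A_mono B_mono Omega_p
     (lam_gt0 n (leq_trans N1 Nn)) (y_res n (leq_trans N1 Nn)) c0 (lam_contr n Nn)).
have theta01 : 0 < theta < 1.
  have [th1 [th12 th2]] := theta_bd 1%N isT.
  have : 1 / (1 + eps) < 1 by rewrite ltr_pdivrMr; lra.
  rewrite theta_gt0 /=; lra.
have [M [M0 [Mser rate]]] := rate_of_bounded_sums N1 T10 theta01 mu01
  (rate_constant_bounds eps_gt1) (fun m Nm => (sums m Nm).1) (fun m Nm => (sums m Nm).2).
by exists N, M; split => //; split => //; split => // q _; exact: rate.
Qed.
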